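(* Let $G=(V,E)$ be a comparability graph. Then the vertices of the graphical zonotope $\mathcal Z_G=\sum_{\{i,j\}\in E}[e_i-e_j,\,e_j-e_i]$ having maximal Euclidean distance to the origin are precisely those corresponding to the transitive orientations of $E$; that is, among all acyclic orientations $O$ of $E$, the Euclidean norm of the point $(\mathrm{outdeg}_O(v)-\mathrm{indeg}_O(v))_{v\in V}$ is maximized exactly when $O$ is transitive. These are the orientations whose induced posets have the maximal number $\varepsilon(G)$ of linear extensions.
   Context: A comparability graph is a simple undirected graph $G=(V,E)$ for which there is a partial order on $V$ under which two distinct vertices are comparable iff they are adjacent. An acyclic orientation of $E$ induces a partial order on $V$ ($u<v$ iff there is a directed path from $u$ to $v$); it is a transitive orientation if the comparability graph of this induced poset equals $G$. The vertices of $\mathcal Z_G$ correspond bijectively to acyclic orientations $O$ of $E$, the vertex corresponding to $O$ being $(\mathrm{outdeg}_O(v)-\mathrm{indeg}_O(v))_{v\in V}$. $\varepsilon(G)$ denotes the maximum over acyclic orientations of $E$ of the number of linear extensions (order-preserving bijections onto $[|V|]$) of the induced poset. *)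

From HB Require Import structures.
From mathcomp Require Import all_boot all_order all_algebra.
Set Implicit Arguments. Unset Strict Implicit. Unset Printing Implicit Defensive.
Import GRing.Theory Num.Theory.

Section Defs.
Variable V : finType.

Definition is_comparability_graph (e : rel V) : Prop :=
  exists lt : rel V,
    irreflexive lt /\ transitive lt /\
    (forall x y, e x y = lt x y || lt y x).

Definition is_orientation (e O : rel V) : bool :=
  [forall x, forall y, (O x y ==> e x y) && (e x y ==> (O x y (+) O y x))].

Definition acyclic_orientation (e O : rel V) : bool :=
  is_orientation e O && [forall x, forall y, O x y ==> ~~ connect O y x].

Definition induced_lt (O : rel V) : rel V :=
  fun u v => [exists w, O u w && connect O w v].

Definition transitive_orientation (e O : rel V) : bool :=
  acyclic_orientation e O &&
  [forall x, forall y, e x y == (induced_lt O x y || induced_lt O y x)].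

Definition outdeg (O : rel V) (v : V) : nat := #|[set w | O v w]|.
Definition indeg (O : rel V) (v : V) : nat := #|[set w | O w v]|.

Definition zvertex (O : rel V) (v : V) : int :=
  (outdeg O v)%:Z - (indeg O v)%:Z.

Definition sqnorm (O : rel V) : int := (\sum_(v : V) (zvertex O v) ^+ 2)%R.

(* linear extensions: order-preserving bijections V -> [|V|] *)
Definition linext_set (O : rel V) : {set {ffun V -> 'I_#|V|}} :=
  [set f : {ffun V -> 'I_#|V|} | injectiveb f &&
     [forall u, forall v, induced_lt O u v ==> (f u < f v)%N]].

Definition n_linext (O : rel V) : nat := #|linext_set O|.

Definition ffrel (F : {ffun V * V -> bool}) : rel V := fun x y => F (x, y).

Definition epsilon (e : rel V) : nat :=
  \max_(F : {ffun V * V -> bool} | acyclic_orientation e (ffrel F)) n_linext (ffrel F).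

End Defs.

From mathcomp Require Import all_boot all_order all_algebra.
From mathcomp Require Import zify.
Import Order.TTheory GRing.Theory Num.Theory.
Set Implicit Arguments. Unset Strict Implicit. Unset Printing Implicit Defensive.

(* The squared norm of the vertex of an orientation O is the sum, over all
   wedges (v, w, w'), of sg(v, w) sg(v, w'), where sg(v, w) = +1, -1 or 0 as
   v -> w, w -> v or v, w are not adjacent.  Wedges whose ends w, w' are equal
   or adjacent contribute the same total for every acyclic orientation: the
   three corners of a triangle contribute 1 altogether.  A wedge with distinct
   non-adjacent ends contributes at most 1, and all of them contribute 1
   exactly when O has no directed 2-path w -> v -> w' between non-adjacent
   vertices, i.e. when O is transitive.

   For linear extensions, count the strictly order-preserving maps
   f : V -> [m] of a poset P: there are #L(P) m^n / n! + O(m^(n-1)) of them.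
   Stanley's transfer map puts them in bijection with the maps g with
   sum_(x in C) (g x + 1) <= m for every chain C, a set that only depends on
   the comparability graph of P and shrinks as that graph grows.  The
   comparability graph of the poset induced by any acyclic orientation
   contains G, with equality iff the orientation is transitive, and one extra
   comparable pair removes order m^n of these maps. *)

Definition comparable_by (T : Type) (r : rel T) : rel T := fun x y => r x y || r y x.

Lemma connect_transitive (T : finType) (r : rel T) x y :
  transitive r -> connect r x y -> x = y \/ r x y.
Proof.
move=> tr /connectP [p pth ->]; elim: p x pth => [|z p IH] x /=; first by left.
case/andP=> rxz /IH [<-|rzl]; right => //; exact: tr rxz rzl.
Qed.

Lemma card_ord_lt N k : k <= N -> #|[set i : 'I_N | i < k]| = k.
Proof.
move=> kN; have -> : [set i : 'I_N | i < k] = [set widen_ord kN j | j : 'I_k].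
  apply/setP=> i; rewrite !inE; apply/idP/imsetP => [ik|[j _ ->]]; last exact: (ltn_ord j).
  by exists (Ordinal ik) => //; apply: val_inj.
rewrite card_imset ?card_ord //.
by move=> a b /(congr1 val) /= /val_inj.
Qed.

Lemma leq_card_bigcup (I T : finType) (P : pred I) (F : I -> {set T}) :
  #|\bigcup_(i | P i) F i| <= \sum_(i | P i) #|F i|.
Proof.
apply: (big_ind2 (fun (A : {set T}) k => #|A| <= k)); first by rewrite cards0.
  by move=> A a B b hA hB; apply: leq_trans (leq_card_setU A B) _; exact: leq_add.
by [].
Qed.

Lemma sum_eq_mem (T : finType) (K : {set T}) w : \sum_(x in K) (x == w) = (w \in K).
Proof.
case: (boolP (w \in K)) => wK.
  by rewrite (big_setD1 w wK) eqxx big1 // => x; rewrite !inE => /andP[/negbTE -> _].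
by rewrite big1 // => x; case: eqP => // ->; rewrite (negbTE wK).
Qed.

Section Orientations.
Variables (V : finType) (e : rel V).
Hypothesis e_sym : symmetric e.
Implicit Types (O r : rel V).

Lemma orientation_edge O x y : is_orientation e O -> O x y -> e x y.
Proof. by move=> /forallP/(_ x)/forallP/(_ y)/andP[/implyP]. Qed.

Lemma orientation_nedge O x y : is_orientation e O -> ~~ e x y -> O x y = false.
Proof. by move=> oO; apply: contraNF; exact: orientation_edge. Qed.

Lemma orientation_flip O x y : is_orientation e O -> e x y -> O y x = ~~ O x y.
Proof.
move=> /forallP/(_ x)/forallP/(_ y)/andP[_ /implyP H] /H.
by case: (O x y); case: (O y x).
Qed.

Lemma acyclic_orientationW O : acyclic_orientation e O -> is_orientation e O.
Proof. by case/andP. Qed.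

Lemma acyclic_orientation_cycle O x y :
  acyclic_orientation e O -> O x y -> ~~ connect O y x.
Proof. by case/andP=> _ /forallP/(_ x)/forallP/(_ y)/implyP. Qed.

Lemma eq_acyclic_orientation r1 r2 :
  r1 =2 r2 -> acyclic_orientation e r1 -> acyclic_orientation e r2.
Proof.
move=> E /andP[/forallP o1 /forallP a1]; apply/andP; split.
  apply/forallP=> x; apply/forallP=> y; rewrite -[r2 x y]E -[r2 y x]E.
  by move: (o1 x) => /forallP/(_ y).
apply/forallP=> x; apply/forallP=> y; rewrite -[r2 x y]E -(eq_connect E).
by move: (a1 x) => /forallP/(_ y).
Qed.

Lemma induced_lt_trans O : transitive (induced_lt O).
Proof.
move=> y x z /existsP[w /andP[Oxw cwy]] /existsP[w' /andP[Oyw' cw'z]].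
apply/existsP; exists w; rewrite Oxw /=.
apply: connect_trans cwy _; apply: connect_trans cw'z; exact: connect1.
Qed.

Lemma induced_lt_irr O : acyclic_orientation e O -> irreflexive (induced_lt O).
Proof.
move=> aO x; apply/negbTE/negP => /existsP[w /andP[Oxw cwx]].
by move: (acyclic_orientation_cycle aO Oxw); rewrite cwx.
Qed.

Lemma induced_ltW O x y : O x y -> induced_lt O x y.
Proof. by move=> Oxy; apply/existsP; exists y; rewrite Oxy connect0. Qed.

Lemma induced_lt_edge O x y :
  is_orientation e O -> e x y -> comparable_by (induced_lt O) x y.
Proof.
move=> oO exy; rewrite /comparable_by.
case Oxy: (O x y); first by rewrite induced_ltW.
by apply/orP; right; apply: induced_ltW; rewrite (orientation_flip oO exy) Oxy.
Qed.

Lemma induced_lt_id r : transitive r -> induced_lt r =2 r.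
Proof.
move=> tr x y; apply/existsP/idP => [[w /andP[rxw /(connect_transitive tr)[<-//|]]]|rxy].
  exact: tr.
by exists y; rewrite rxy connect0.
Qed.

Lemma transitive_orientationP O :
  acyclic_orientation e O -> transitive_orientation e O <-> transitive O.
Proof.
move=> aO; have oO := acyclic_orientationW aO; split.
  case/andP=> _ /forallP cmpE y x z Oxy Oyz.
  have exz : e x z.
    move: (cmpE x) => /forallP/(_ z)/eqP ->.
    by rewrite (induced_lt_trans (induced_ltW Oxy) (induced_ltW Oyz)).
  rewrite -[O x z]negbK -(orientation_flip oO exz); apply/negP => Ozx.
  move: (acyclic_orientation_cycle aO Ozx) => /negP; apply.
  exact: connect_trans (connect1 Oxy) (connect1 Oyz).
move=> trO; rewrite /transitive_orientation aO; apply/forallP=> x; apply/forallP=> y.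
rewrite !induced_lt_id //; apply/eqP.
case exy: (e x y); first by rewrite (orientation_flip oO exy); case: (O x y).
by rewrite (orientation_nedge oO) ?exy // (orientation_nedge oO) // e_sym exy.
Qed.

Lemma strict_order_acyclic lt : irreflexive lt -> transitive lt ->
  (forall x y, e x y = comparable_by lt x y) -> acyclic_orientation e lt.
Proof.
move=> ltI ltT ltE; have asym x y : lt x y -> lt y x = false.
  by move=> lxy; apply/negbTE/negP => /(ltT _ _ _ lxy); rewrite ltI.
apply/andP; split.
  apply/forallP=> x; apply/forallP=> y; rewrite ltE /comparable_by.
  case lxy: (lt x y); last by case: (lt y x).
  by rewrite (asym _ _ lxy).
apply/forallP=> x; apply/forallP=> y; apply/implyP=> lxy; apply/negP.
by case/(connect_transitive ltT)=> [yx|/asym]; [rewrite yx ltI in lxy | rewrite lxy].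
Qed.

Lemma comparability_transitive_orientation :
  is_comparability_graph e -> exists F, transitive_orientation e (ffrel F).
Proof.
case=> lt [ltI [ltT ltE]]; pose F := [ffun p : V * V => lt p.1 p.2].
have FE : ffrel F =2 lt by move=> x y; rewrite /ffrel ffunE.
have aF := eq_acyclic_orientation (fun x y => esym (FE x y)) (strict_order_acyclic ltI ltT ltE).
exists F; apply/(transitive_orientationP aF) => y x z.
by rewrite !FE; exact: ltT.
Qed.

End Orientations.

Section SquaredNorm.
Variables (V : finType) (e : rel V).
Hypotheses (e_sym : symmetric e) (e_irr : irreflexive e).
Implicit Types (O : rel V) (p : V * (V * V)).
Local Open Scope ring_scope.

Definition sg O x y : int := (O x y)%:Z - (O y x)%:Z.

Definition wedge_term O p : int := sg O p.1 p.2.1 * sg O p.1 p.2.2.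

Definition closed_wedge p := (p.2.1 == p.2.2) || e p.2.1 p.2.2.

Definition triangle p := [&& e p.1 p.2.1, e p.1 p.2.2 & e p.2.1 p.2.2].

Lemma sqnorm_wedges O : sqnorm O = \sum_p wedge_term O p.
Proof.
have zvertexE v : zvertex O v = \sum_w sg O v w.
  have cardE (P : pred V) : #|[set w | P w]|%:Z = \sum_w (P w)%:Z.
    rewrite -sum1_card big_mkcond /= -natz natr_sum.
    by apply: eq_bigr => w _; rewrite inE; case: (P w).
  by rewrite /zvertex /outdeg /indeg sumrB !cardE.
rewrite /sqnorm; under eq_bigr => v _ do rewrite zvertexE expr2 mulr_suml.
under eq_bigr => v _ do under eq_bigr => w _ do rewrite mulr_sumr.
by under eq_bigr => v _ do rewrite pair_big /=; rewrite pair_big.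
Qed.

Lemma sg_nedge O x y : is_orientation e O -> ~~ e x y -> sg O x y = 0.
Proof.
by move=> oO nexy; rewrite /sg (orientation_nedge oO nexy) (orientation_nedge oO) // e_sym.
Qed.

Lemma sg_edge O x y : is_orientation e O -> e x y -> sg O x y = (-1) ^+ ~~ O x y.
Proof. by move=> oO exy; rewrite /sg (orientation_flip oO exy); case: (O x y). Qed.

Lemma sgN O x y : sg O y x = - sg O x y.
Proof. by rewrite /sg opprB. Qed.

Lemma wedge_term_le O p : is_orientation e O ->
  wedge_term O p <= (e p.1 p.2.1 && e p.1 p.2.2)%:Z.
Proof.
case: p => v [w w'] oO; rewrite /wedge_term /=.
case evw: (e v w); last by rewrite sg_nedge ?evw ?mul0r.
case evw': (e v w'); last by rewrite (@sg_nedge _ v w') ?evw' ?mulr0.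
by rewrite !sg_edge //; case: (O v w); case: (O v w').
Qed.

(* The value [-1] arises exactly from the directed 2-paths through [v]. *)
Lemma wedge_termE O p : is_orientation e O -> e p.1 p.2.1 -> e p.1 p.2.2 ->
  wedge_term O p = if O p.1 p.2.1 == O p.1 p.2.2 then 1 else -1.
Proof.
case: p => v [w w'] oO /= evw evw'; rewrite /wedge_term /= !sg_edge //.
by case: (O v w); case: (O v w').
Qed.

Lemma wedge_term_diag O v w : is_orientation e O -> wedge_term O (v, (w, w)) = (e v w)%:Z.
Proof.
move=> oO; case evw: (e v w); first by rewrite wedge_termE ?eqxx.
by rewrite /wedge_term /= sg_nedge ?evw ?mul0r.
Qed.

Lemma wedge_term_triangle O p :
  is_orientation e O -> ~~ triangle p -> e p.2.1 p.2.2 -> wedge_term O p = 0.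
Proof.
case: p => v [w w'] oO; rewrite /triangle /wedge_term /= => ntri eww'.
case evw: (e v w); last by rewrite sg_nedge ?evw ?mul0r.
by rewrite (@sg_nedge _ v w') ?mulr0 //; move: ntri; rewrite evw eww' andbT.
Qed.

Lemma triangle_term_sum O v w w' : acyclic_orientation e O -> triangle (v, (w, w')) ->
  wedge_term O (v, (w, w')) + wedge_term O (w, (v, w')) + wedge_term O (w', (v, w)) = 1.
Proof.
move=> aO /and3P[evw evw' eww']; have oO := acyclic_orientationW aO.
rewrite /wedge_term /= (sgN O v w) (sgN O v w') (sgN O w w').
rewrite (sg_edge oO evw) (sg_edge oO evw') (sg_edge oO eww').
case a: (O v w); case b: (O w w'); case c: (O v w') => //=.
- move: (acyclic_orientation_cycle aO a) => /negP[].
  apply: connect_trans (connect1 b) (connect1 _).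
  by rewrite (orientation_flip oO evw') c.
- move: (acyclic_orientation_cycle aO c) => /negP[].
  have Ow'w : O w' w by rewrite (orientation_flip oO eww') b.
  have Owv : O w v by rewrite (orientation_flip oO evw) a.
  exact: connect_trans (connect1 Ow'w) (connect1 Owv).
Qed.

Lemma triangle_sum O : acyclic_orientation e O ->
  (\sum_(p | triangle p) wedge_term O p) *+ 3 = \sum_(p | triangle p) 1.
Proof.
move=> aO; pose h1 p := (p.2.1, (p.1, p.2.2)); pose h2 p := (p.2.2, (p.1, p.2.1)).
have triangle_rot h : (forall p, triangle (h p) = triangle p) -> injective h ->
    \sum_(p | triangle p) wedge_term O p = \sum_(p | triangle p) wedge_term O (h p).
  by move=> th ih; rewrite (reindex_inj ih); apply: eq_bigl => p; rewrite th.
have t1 p : triangle (h1 p) = triangle p.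
  case: p => v [w w']; rewrite /h1 /triangle /= (e_sym w v).
  by case: (e v w); case: (e v w'); case: (e w w').
have t2 p : triangle (h2 p) = triangle p.
  case: p => v [w w']; rewrite /h2 /triangle /= (e_sym w' v) (e_sym w' w).
  by case: (e v w); case: (e v w'); case: (e w w').
rewrite mulrS mulr2n {2}(triangle_rot h1) //; last by case=> a [b c] [a' [b' c']] [-> -> ->].
rewrite {2}(triangle_rot h2) //; last by case=> a [b c] [a' [b' c']] [-> -> ->].
rewrite -!big_split /=; apply: eq_bigr; case=> v [w w'] tp.
by rewrite /h1 /h2 /= addrA triangle_term_sum.
Qed.

Lemma closed_wedge_sumE O : is_orientation e O ->
  \sum_(p | closed_wedge p) wedge_term O p =
  \sum_(p | p.2.1 == p.2.2) (e p.1 p.2.1)%:Z + \sum_(p | triangle p) wedge_term O p.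
Proof.
move=> oO; rewrite (bigID (fun p => p.2.1 == p.2.2)) /=; congr (_ + _).
  rewrite (eq_bigl (fun p => p.2.1 == p.2.2)) => [|p]; last first.
    by rewrite /closed_wedge andbC; case: eqP.
  by apply: eq_bigr; case=> v [w w'] /= /eqP <-; rewrite wedge_term_diag.
rewrite [LHS]big_mkcond [RHS]big_mkcond; apply: eq_bigr; case=> v [w w'] _ /=.
rewrite /closed_wedge /=; case: eqVneq => [<-|ww'] /=; first by rewrite /triangle e_irr !andbF.
case eww': (e w w'); last by rewrite /triangle eww' !andbF.
by case: ifP => // ntp; rewrite wedge_term_triangle ?ntp.
Qed.

Lemma closed_wedge_sum O O' : acyclic_orientation e O -> acyclic_orientation e O' ->
  \sum_(p | closed_wedge p) wedge_term O p = \sum_(p | closed_wedge p) wedge_term O' p.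
Proof.
move=> aO aO'; rewrite !closed_wedge_sumE ?acyclic_orientationW //; congr (_ + _).
have := triangle_sum aO; rewrite -(triangle_sum aO').
by move: (\sum_(p | _) _) (\sum_(p | _) _) => a b; lia.
Qed.

Lemma sqnorm_le_open O O' : acyclic_orientation e O -> acyclic_orientation e O' ->
  (sqnorm O <= sqnorm O') =
  (\sum_(p | ~~ closed_wedge p) wedge_term O p <= \sum_(p | ~~ closed_wedge p) wedge_term O' p).
Proof.
move=> aO aO'; rewrite !sqnorm_wedges !(bigID closed_wedge predT) /=.
by rewrite (closed_wedge_sum aO aO') lerD2l.
Qed.

Lemma open_wedge_term O p : is_orientation e O -> transitive O -> ~~ closed_wedge p ->
  wedge_term O p = (e p.1 p.2.1 && e p.1 p.2.2)%:Z.
Proof.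
case: p => v [w w'] oO trO; rewrite /closed_wedge negb_or /= => /andP[_ neww'].
case evw: (e v w); last by rewrite /wedge_term sg_nedge ?evw ?mul0r.
case evw': (e v w'); last by rewrite /wedge_term (@sg_nedge _ v w') ?evw' ?mulr0.
rewrite wedge_termE //=; case Ovw: (O v w); case Ovw': (O v w') => //=.
- have Ow'v : O w' v by rewrite (orientation_flip oO evw') Ovw'.
  by move: (orientation_edge oO (trO _ _ _ Ow'v Ovw)); rewrite e_sym (negbTE neww').
- have Owv : O w v by rewrite (orientation_flip oO evw) Ovw.
  by move: (orientation_edge oO (trO _ _ _ Owv Ovw')); rewrite (negbTE neww').
Qed.

Lemma transitive_of_open_wedge_terms O : acyclic_orientation e O ->
  (forall p, ~~ closed_wedge p -> wedge_term O p = (e p.1 p.2.1 && e p.1 p.2.2)%:Z) ->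
  transitive O.
Proof.
move=> aO H y x z Oxy Oyz; have oO := acyclic_orientationW aO.
have exy := orientation_edge oO Oxy; have eyz := orientation_edge oO Oyz.
have Oyx : O y x = false by rewrite (orientation_flip oO exy) Oxy.
have [exz|nexz] := boolP (e x z).
  rewrite -[O x z]negbK -(orientation_flip oO exz); apply/negP => Ozx.
  move: (acyclic_orientation_cycle aO Ozx) => /negP[].
  exact: connect_trans (connect1 Oxy) (connect1 Oyz).
have xz : x != z by apply: contraTneq Oyz => <-; rewrite Oyx.
move: (H (y, (x, z))); rewrite /closed_wedge /= (negbTE xz) (negbTE nexz) => /(_ isT).
by rewrite wedge_termE ?(e_sym y x) //= Oyx Oyz exy eyz => /eqP.
Qed.

Lemma sqnorm_le_transitive O O' : acyclic_orientation e O ->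
  transitive_orientation e O' -> sqnorm O <= sqnorm O'.
Proof.
move=> aO tO'; have aO' : acyclic_orientation e O' by case/andP: tO'.
have trO' := (transitive_orientationP e_sym aO').1 tO'.
rewrite sqnorm_le_open //; apply: ler_sum => p np.
rewrite (open_wedge_term (acyclic_orientationW aO') trO' np).
exact: wedge_term_le (acyclic_orientationW aO).
Qed.

Lemma transitive_of_sqnorm_ge O O' : acyclic_orientation e O ->
  transitive_orientation e O' -> sqnorm O' <= sqnorm O -> transitive_orientation e O.
Proof.
move=> aO tO'; have aO' : acyclic_orientation e O' by case/andP: tO'.
have oO := acyclic_orientationW aO; have trO' := (transitive_orientationP e_sym aO').1 tO'.
rewrite sqnorm_le_open //.
under eq_bigr => p np do rewrite (open_wedge_term (acyclic_orientationW aO') trO' np).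
move=> ge; apply/(transitive_orientationP e_sym aO)/transitive_of_open_wedge_terms => // p np.
have gap_ge0 q : ~~ closed_wedge q -> 0 <= (e q.1 q.2.1 && e q.1 q.2.2)%:Z - wedge_term O q.
  by rewrite subr_ge0 => _; exact: wedge_term_le.
have gap_sum0 : \sum_(q | ~~ closed_wedge q)
    ((e q.1 q.2.1 && e q.1 q.2.2)%:Z - wedge_term O q) = 0.
  apply/eqP; rewrite sumrB subr_eq0 eq_le ge /=.
  by apply: ler_sum => q _; exact: wedge_term_le.
by apply/eqP; rewrite eq_sym -subr_eq0; apply/eqP; exact: psumr_eq0P gap_sum0 p np.
Qed.

End SquaredNorm.

Section StrictMaps.
Variable V : finType.
Local Notation n := #|V|.
Implicit Types (r : rel V) (m : nat).

Definition strict_maps r m : {set {ffun V -> 'I_m}} :=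
  [set f : {ffun V -> 'I_m} | [forall u, forall v, r u v ==> (f u < f v)]].

Definition inj_strict_maps r m : {set {ffun V -> 'I_m}} :=
  [set f : {ffun V -> 'I_m} | injectiveb f && [forall u, forall v, r u v ==> (f u < f v)]].

Definition linexts r := inj_strict_maps r n.

Lemma linext_setE O : linext_set O = linexts (induced_lt O).
Proof. by []. Qed.

Lemma strict_mapsP r m (f : {ffun V -> 'I_m}) :
  reflect (forall u v, r u v -> f u < f v) (f \in strict_maps r m).
Proof.
rewrite inE; apply: (iffP forallP) => [H u v|H u]; first by move: (H u) => /forallP/(_ v)/implyP.
by apply/forallP=> v; apply/implyP; exact: H.
Qed.

Lemma inj_strict_mapsE r m (f : {ffun V -> 'I_m}) :
  (f \in inj_strict_maps r m) = injectiveb f && (f \in strict_maps r m).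
Proof. by rewrite !inE. Qed.

Definition incr_maps m : {set {ffun 'I_n -> 'I_m}} :=
  [set a : {ffun 'I_n -> 'I_m} | [forall i : 'I_n, forall j : 'I_n, (i < j) ==> (a i < a j)]].

Definition noninj_maps m : {set {ffun V -> 'I_m}} := [set f : {ffun V -> 'I_m} | ~~ injectiveb f].

Definition rank (g : V -> nat) x := #|[set y | g y < g x]|.

Lemma rank_lt (g : V -> nat) x y : g y < g x -> rank g y < rank g x.
Proof.
move=> gyx; apply: proper_card; apply/properP; split.
  by apply/subsetP=> z; rewrite !inE => h; exact: ltn_trans h gyx.
by exists y; rewrite !inE ?ltnn.
Qed.

Lemma rank_bound (g : V -> nat) x : rank g x < n.
Proof.
rewrite -cardsT; apply: proper_card; apply/properP; split; first exact: subsetT.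
by exists x; rewrite !inE ?ltnn.
Qed.

Lemma rank_inj (g : V -> nat) : injective g -> injective (rank g).
Proof.
move=> ig x y; case: (ltngtP (g x) (g y)) => [h|h|/ig //] E.
- by move: (rank_lt h); rewrite E ltnn.
- by move: (rank_lt h); rewrite E ltnn.
Qed.

Lemma rank_ord (s : V -> 'I_n) x : injective s -> s x = rank (fun y => s y : nat) x :> nat.
Proof.
move=> inj_s; have onto i : i \in codom s by apply: inj_card_onto; rewrite ?card_ord.
have sxn : s x <= n := ltnW (ltn_ord (s x)).
rewrite /rank -(card_imset _ inj_s) -{1}(card_ord_lt sxn).
apply: eq_card => i; rewrite inE; apply/idP/imsetP => [ilt|[y]]; last by rewrite inE => h ->.
by exists (iinv (onto i)); rewrite ?inE f_iinv.
Qed.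

Lemma incr_mapsP m (a : {ffun 'I_n -> 'I_m}) (i j : 'I_n) :
  a \in incr_maps m -> (a i < a j) = (i < j).
Proof.
rewrite inE => /forallP H.
have lt (i' j' : 'I_n) : i' < j' -> a i' < a j' by move: (H i') => /forallP/(_ j')/implyP.
case: (ltngtP i j) => [/lt -> //|/lt ji|/val_inj -> ]; last by rewrite ltnn.
by apply/negbTE; rewrite -leqNgt ltnW.
Qed.

Lemma incr_maps_inj m (a : {ffun 'I_n -> 'I_m}) : a \in incr_maps m -> injective a.
Proof.
move=> aI i j E; apply: val_inj; case: (ltngtP i j) => // h.
  by move: h; rewrite -(incr_mapsP _ _ aI) E ltnn.
by move: h; rewrite -(incr_mapsP _ _ aI) E ltnn.
Qed.

Definition compose m (p : {ffun V -> 'I_n} * {ffun 'I_n -> 'I_m}) : {ffun V -> 'I_m} :=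
  [ffun x => p.2 (p.1 x)].

Section Factorization.
Variables (r : rel V) (m : nat).

Lemma linexts_inj s : s \in linexts r -> injective s.
Proof. by rewrite inE => /andP[/injectiveP]. Qed.

Lemma linexts_lt s u v : s \in linexts r -> r u v -> s u < s v.
Proof. by rewrite inj_strict_mapsE => /andP[_ /strict_mapsP]; apply. Qed.

Lemma compose_inj_strict p : p \in setX (linexts r) (incr_maps m) ->
  compose p \in inj_strict_maps r m.
Proof.
case: p => s a /setXP[/= sL aI]; rewrite inj_strict_mapsE; apply/andP; split.
  apply/injectiveP=> x y; rewrite !ffunE /= => /(incr_maps_inj aI); exact: linexts_inj.
by apply/strict_mapsP=> u v ruv; rewrite !ffunE /= (incr_mapsP _ _ aI) (linexts_lt sL).
Qed.

(* Both factors are read off [compose p]: the linear extension as the ranking of its values. *)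
Lemma compose_injective : {in setX (linexts r) (incr_maps m) &, injective (@compose m)}.
Proof.
move=> [s a] [s' a'] /setXP[sL aI] /setXP[s'L a'I] E.
have Ex x : a (s x) = a' (s' x).
  by have := congr1 (fun h : {ffun V -> 'I_m} => h x) E; rewrite !ffunE.
have ss' : s = s'.
  apply/ffunP=> x; apply: val_inj => /=.
  rewrite (rank_ord x (linexts_inj sL)) (rank_ord x (linexts_inj s'L)).
  by apply: eq_card => y; rewrite !inE -(incr_mapsP _ _ aI) -(incr_mapsP _ _ a'I) !Ex.
subst s'; congr (_, _); apply/ffunP=> i.
have onto : i \in codom s by apply: inj_card_onto; rewrite ?card_ord //; exact: linexts_inj sL.
by rewrite -(f_iinv onto) Ex.
Qed.

Lemma inj_strict_maps_factor f : f \in inj_strict_maps r m ->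
  exists2 p, p \in setX (linexts r) (incr_maps m) & f = compose p.
Proof.
rewrite inj_strict_mapsE => /andP[/injectiveP fi /strict_mapsP fS].
pose g x := (f x : nat); have gi : injective g by move=> x y /val_inj /fi.
pose s := [ffun x => Ordinal (rank_bound g x)] : {ffun V -> 'I_n}.
have si : injective s by move=> x y /(congr1 val); rewrite !ffunE /= => /(rank_inj gi).
have onto i : i \in codom s by apply: inj_card_onto; rewrite ?card_ord.
pose a := [ffun i => f (iinv (onto i))] : {ffun 'I_n -> 'I_m}.
have aI : a \in incr_maps m.
  rewrite inE; apply/forallP=> i; apply/forallP=> j; apply/implyP=> ij; rewrite !ffunE.
  rewrite -(f_iinv (onto i)) -(f_iinv (onto j)) !ffunE /= in ij.
  set x := iinv (onto i) in ij *; set y := iinv (onto j) in ij *.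
  case: (ltngtP (f x) (f y)) => // [yx|/val_inj /fi xy].
    by move: (rank_lt (g := g) yx); rewrite ltnNge (ltnW ij).
  by move: ij; rewrite xy ltnn.
exists (s, a).
  rewrite inE /= aI andbT inj_strict_mapsE; apply/andP; split; first exact/injectiveP.
  by apply/strict_mapsP=> u v ruv; rewrite !ffunE /=; apply/rank_lt/fS.
apply/ffunP=> x; rewrite !ffunE /=.
have sx : s x = Ordinal (rank_bound g x) by rewrite ffunE.
by rewrite -sx; have -> : iinv (onto (s x)) = x by apply: si; rewrite f_iinv.
Qed.

Lemma card_inj_strict_maps : #|inj_strict_maps r m| = #|linexts r| * #|incr_maps m|.
Proof.
rewrite -cardsX -(card_in_imset compose_injective); apply: eq_card => f.
apply/idP/imsetP => [/inj_strict_maps_factor [p pP ->]|[p pP ->]]; first by exists p.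
exact: compose_inj_strict.
Qed.

End Factorization.

Lemma strict_maps_le r m : #|strict_maps r m| <= #|inj_strict_maps r m| + #|noninj_maps m|.
Proof.
apply: leq_trans (leq_card_setU _ _); apply: subset_leq_card; apply/subsetP=> f fS.
by rewrite in_setU inj_strict_mapsE fS andbT inE orbN.
Qed.

Lemma card_maps_eq m (x y : V) : x != y ->
  #|[set f : {ffun V -> 'I_m} | f x == f y]| <= m ^ n.-1.
Proof.
move=> xy; pose res (f : {ffun V -> 'I_m}) : {ffun {z : V | z != y} -> 'I_m} :=
  [ffun z => f (val z)].
have <- : #|{ffun {z : V | z != y} -> 'I_m}| = m ^ n.-1.
  by rewrite card_ffun card_ord card_sig -(cardC1 y).
rewrite -(card_in_imset (f := res)); first exact: max_card.
move=> f f'; rewrite !inE => /eqP fxy /eqP f'xy E; apply/ffunP=> z.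
have resE (g : {ffun V -> 'I_m}) w (wy : w != y) : g w = res g (exist _ w wy).
  by rewrite ffunE.
case: (eqVneq z y) => [->|zy]; first by rewrite -fxy -f'xy !(resE _ _ xy) E.
by rewrite !(resE _ _ zy) E.
Qed.

Lemma card_noninj_maps m : #|noninj_maps m| <= n * n * m ^ n.-1.
Proof.
have sub : noninj_maps m \subset
    \bigcup_(p : V * V | p.1 != p.2) [set f : {ffun V -> 'I_m} | f p.1 == f p.2].
  apply/subsetP=> f; rewrite inE => /injectivePn [x [y xy fxy]].
  by apply/bigcupP; exists (x, y) => //; rewrite inE fxy.
apply: leq_trans (subset_leq_card sub) _; apply: leq_trans (leq_card_bigcup _ _) _.
apply: (@leq_trans (\sum_(p : V * V) m ^ n.-1)); last by rewrite sum_nat_const card_prod.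
apply: (@leq_trans (\sum_(p : V * V | p.1 != p.2) m ^ n.-1)).
  by apply: leq_sum => p; exact: card_maps_eq.
by rewrite [X in _ <= X](bigID (fun p : V * V => p.1 != p.2)) /= leq_addr.
Qed.

Lemma card_incr_maps_ge m t : n * t <= m -> t ^ n <= #|incr_maps m|.
Proof.
move=> ntm; have bnd (h : {ffun 'I_n -> 'I_t}) (i : 'I_n) : i * t + h i < m.
  by have := ltn_ord i; have := ltn_ord (h i); nia.
pose mk (h : {ffun 'I_n -> 'I_t}) : {ffun 'I_n -> 'I_m} := [ffun i => Ordinal (bnd h i)].
have mk_inj : injective mk.
  move=> h h' E; apply/ffunP=> i; apply: val_inj.
  have := congr1 (fun a : {ffun 'I_n -> 'I_m} => nat_of_ord (a i)) E.
  by rewrite !ffunE /= => /addnI.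
have -> : t ^ n = #|[set mk h | h : {ffun 'I_n -> 'I_t}]|.
  by rewrite card_imset // card_ffun !card_ord.
apply: subset_leq_card.
apply/subsetP=> a /imsetP[h _ ->]; rewrite inE.
apply/forallP=> i; apply/forallP=> j; apply/implyP=> ij; rewrite !ffunE /=.
have := ltn_ord (h i); have : i.+1 * t <= j * t by rewrite leq_mul2r ij orbT.
rewrite mulSn; move: (i * t) (j * t) (nat_of_ord (h i)) (nat_of_ord (h j)); lia.
Qed.

End StrictMaps.

Section ChainPoints.
Variable V : finType.
Implicit Types (r : rel V) (K : {set V}).

Definition chain r K := [forall x in K, forall y in K, (x != y) ==> comparable_by r x y].

Definition chain_points r m : {set {ffun V -> 'I_m}} :=
  [set g : {ffun V -> 'I_m} | [forall K, chain r K ==> (\sum_(x in K) (g x).+1 <= m)]].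

Lemma chainP r K :
  reflect (forall x y, x \in K -> y \in K -> x != y -> comparable_by r x y) (chain r K).
Proof.
apply: (iffP forall_inP) => [H x y xK yK xy|H x xK].
  by move: (H x xK) => /forall_inP/(_ y yK)/implyP; apply.
by apply/forall_inP=> y yK; apply/implyP; exact: H.
Qed.

Lemma chain_sub r K K' : K' \subset K -> chain r K -> chain r K'.
Proof. by move=> /subsetP sub /chainP H; apply/chainP=> x y /sub xK /sub; exact: H. Qed.

Lemma chain_pointsP r m (g : {ffun V -> 'I_m}) :
  reflect (forall K, chain r K -> \sum_(x in K) (g x).+1 <= m) (g \in chain_points r m).
Proof.
rewrite inE; apply: (iffP forallP) => [H K|H K]; first exact/implyP.
by apply/implyP; exact: H.
Qed.

Lemma chain_points_mono (P Q : rel V) m : (forall x y, P x y -> comparable_by Q x y) ->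
  chain_points Q m \subset chain_points P m.
Proof.
move=> PQ; apply/subsetP=> g /chain_pointsP gW; apply/chain_pointsP=> K /chainP cK.
apply: gW; apply/chainP=> x y xK yK xy.
by case/orP: (cK x y xK yK xy) => /PQ; rewrite /comparable_by // orbC.
Qed.

Section Transfer.
Variable r : rel V.
Hypotheses (r_irr : irreflexive r) (r_trans : transitive r).

Definition nbelow x := #|[set y | r y x]|.

Lemma nbelow_lt x y : r y x -> nbelow y < nbelow x.
Proof.
move=> ryx; apply: proper_card; apply/properP; split.
  by apply/subsetP=> z; rewrite !inE => rzy; exact: r_trans rzy ryx.
by exists y; rewrite !inE ?r_irr.
Qed.

Lemma below_ind (P : V -> Prop) :
  (forall x, (forall y, r y x -> P y) -> P x) -> forall x, P x.
Proof.
move=> H; suff : forall k x, nbelow x < k -> P x by move=> h x; exact: h _ x (ltnSn _).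
elim=> // k IH x xk; apply: H => y ryx; apply: IH.
by move: (nbelow_lt ryx) xk; lia.
Qed.

Lemma chain_top K : chain r K -> K != set0 ->
  exists2 z, z \in K & forall x, x \in K -> x != z -> r x z.
Proof.
move=> /chainP cK /set0Pn [x0 x0K]; case: (arg_maxnP nbelow x0K) => z zK zmax.
exists z => // x xK xz; case/orP: (cK x z xK zK xz) => // rzx.
by move: (zmax x xK) (nbelow_lt rzx); lia.
Qed.

Section ToChainPoints.
Variable m : nat.

(* Stanley's transfer map: [f x] minus the least value a strict map may take
   at [x] given the values of [f] below [x]. *)
Definition floor_below (f : {ffun V -> 'I_m}) x := \max_(y | r y x) (f y).+1.

Definition to_chain_point (f : {ffun V -> 'I_m}) : {ffun V -> 'I_m} :=
  [ffun x => Ordinal (leq_ltn_trans (leq_subr (floor_below f x) (f x)) (ltn_ord (f x)))].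

Lemma floor_below_le f x : f \in strict_maps r m -> floor_below f x <= f x.
Proof. by move=> /strict_mapsP fS; apply/bigmax_leqP=> y ryx; exact: fS. Qed.

Lemma to_chain_point_sum f K z : f \in strict_maps r m -> chain r K -> z \in K ->
  (forall x, x \in K -> x != z -> r x z) -> \sum_(x in K) (to_chain_point f x).+1 <= (f z).+1.
Proof.
move=> fS; elim: {K}#|K| {-2}K z (leqnn #|K|) => [|k IH] K z cardK chK zK top.
  by move: cardK; rewrite (cardD1 z) zK.
rewrite (big_setD1 z zK) /= ffunE /=; have hz := floor_below_le z fS.
case: (eqVneq (K :\ z) set0) => [->|ne]; first by rewrite big_set0 addn0 ltnS leq_subr.
have chK' : chain r (K :\ z) by apply: chain_sub chK; exact: subsetDl.
case: (chain_top chK' ne) => z' z'K top'; move: (z'K); rewrite !inE => /andP[z'z z'K0].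
have IHz' : \sum_(x in K :\ z) (to_chain_point f x).+1 <= (f z').+1.
  by apply: IH => //; move: cardK; rewrite (cardsD1 z K) zK.
have : (f z').+1 <= floor_below f z.
  by apply: (leq_bigmax_cond (F := fun y => (f y).+1)); exact: top.
move=> h; apply: leq_trans (leq_add (leqnn _) (leq_trans IHz' h)) _.
by rewrite addSn subnK.
Qed.

Lemma to_chain_point_chain f : f \in strict_maps r m -> to_chain_point f \in chain_points r m.
Proof.
move=> fS; apply/chain_pointsP=> K chK.
case: (eqVneq K set0) => [->|ne]; first by rewrite big_set0.
case: (chain_top chK ne) => z zK top.
exact: leq_trans (to_chain_point_sum fS chK zK top) (ltn_ord _).
Qed.

Lemma to_chain_point_inj : {in strict_maps r m &, injective to_chain_point}.
Proof.
move=> f f' fS f'S E; apply/ffunP; apply: below_ind => x IH.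
have hE : floor_below f x = floor_below f' x by apply: eq_bigr => y ryx; rewrite (IH y ryx).
have := congr1 (fun h : {ffun V -> 'I_m} => nat_of_ord (h x)) E; rewrite !ffunE /= hE => h.
apply: ord_inj; move: (floor_below_le x fS) (floor_below_le x f'S) h; rewrite hE.
move: (nat_of_ord (f x)) (nat_of_ord (f' x)) (floor_below f' x); lia.
Qed.

End ToChainPoints.

Section OfChainPoints.
Variable m : nat.
Implicit Types (g : {ffun V -> 'I_m}).

Definition top_chain x K := [&& chain r K, x \in K & [forall y in K, (y != x) ==> r y x]].

Definition chain_height g x := \max_(K | top_chain x K) \sum_(y in K) (g y).+1.

Lemma top_chain1 x : top_chain x [set x].
Proof.
rewrite /top_chain set11 /=; apply/andP; split.
  by apply/chainP=> a b; rewrite !inE => /eqP-> /eqP->; rewrite eqxx.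
by apply/forall_inP=> y; rewrite inE => ->.
Qed.

Lemma top_chain_top x K y : top_chain x K -> y \in K -> y != x -> r y x.
Proof. by case/and3P=> _ _ /forall_inP/(_ y) H yK; move/implyP: (H yK). Qed.

Lemma top_chainU1 x y K : r y x -> top_chain y K -> top_chain x (x |: K).
Proof.
move=> ryx tK; have below z : z \in K -> r z x.
  by move=> zK; case: (eqVneq z y) => [->//|zy]; exact: r_trans (top_chain_top tK zK zy) ryx.
case/and3P: (tK) => /chainP cK _ _; rewrite /top_chain setU11 /=; apply/andP; split.
  apply/chainP=> a b; rewrite !inE => /orP[/eqP->|aK] /orP[/eqP->|bK]; rewrite ?eqxx //.
  - by rewrite /comparable_by below ?orbT.
  - by rewrite /comparable_by below.
  - exact: cK.
apply/forall_inP=> z; rewrite !inE => /orP[/eqP->|zK]; first by rewrite eqxx.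
by rewrite below ?implybT.
Qed.

Lemma chain_height_ge g x : (g x).+1 <= chain_height g x.
Proof.
have := leq_bigmax_cond (F := fun K => \sum_(y in K) (g y).+1) _ (top_chain1 x).
by rewrite big_set1.
Qed.

Lemma chain_height_le g x : g \in chain_points r m -> chain_height g x <= m.
Proof. by move=> /chain_pointsP gW; apply/bigmax_leqP=> K /and3P[cK _ _]; exact: gW. Qed.

Lemma chain_height_step g x y : r y x -> (g x).+1 + chain_height g y <= chain_height g x.
Proof.
move=> ryx; rewrite -leq_subRL; last exact: chain_height_ge.
apply/bigmax_leqP=> K tK; rewrite leq_subRL; last exact: chain_height_ge.
have xK : x \notin K.
  apply/negP=> xK; case: (eqVneq x y) => [xy|xy]; first by rewrite xy r_irr in ryx.
  by move: (r_trans (top_chain_top tK xK xy) ryx); rewrite r_irr.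
have := leq_bigmax_cond (F := fun K => \sum_(y in K) (g y).+1) _ (top_chainU1 ryx tK).
by rewrite big_setU1.
Qed.

Lemma chain_height_rec g x : chain_height g x = (g x).+1 + \max_(y | r y x) chain_height g y.
Proof.
apply/eqP; rewrite eqn_leq; apply/andP; split; last first.
  rewrite -leq_subRL; last exact: chain_height_ge.
  apply/bigmax_leqP=> y ryx; rewrite leq_subRL; last exact: chain_height_ge.
  exact: chain_height_step.
apply/bigmax_leqP=> K tK; have xK : x \in K by case/and3P: tK.
rewrite (big_setD1 x xK) /= leq_add2l.
case: (eqVneq (K :\ x) set0) => [->|ne]; first by rewrite big_set0.
have chK' : chain r (K :\ x) by case/and3P: tK => cK _ _; apply: chain_sub cK; exact: subsetDl.
case: (chain_top chK' ne) => y yK' top; move: (yK'); rewrite !inE => /andP[yx yK].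
have tK' : top_chain y (K :\ x).
  by rewrite /top_chain chK' yK' /=; apply/forall_inP=> z zK'; apply/implyP; exact: top.
apply: leq_trans (leq_bigmax_cond (F := fun K => \sum_(y in K) (g y).+1) _ tK') _.
exact: (leq_bigmax_cond (F := chain_height g)) (top_chain_top tK yK yx).
Qed.

Lemma of_chain_point_subproof g x : (minn (chain_height g x) m).-1 < m.
Proof. by have := ltn_ord (g x); move: (nat_of_ord (g x)) (chain_height g x); lia. Qed.

(* The truncation by [m] only matters outside [chain_points r m], where it keeps the map total. *)
Definition of_chain_point g : {ffun V -> 'I_m} :=
  [ffun x => Ordinal (of_chain_point_subproof g x)].

Lemma of_chain_pointE g x : g \in chain_points r m ->
  of_chain_point g x = (chain_height g x).-1 :> nat.
Proof. by move=> gW; rewrite ffunE /= (minn_idPl (chain_height_le x gW)). Qed.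

Lemma of_chain_point_strict g : g \in chain_points r m -> of_chain_point g \in strict_maps r m.
Proof.
move=> gW; apply/strict_mapsP=> y x ryx; rewrite !of_chain_pointE //.
have := chain_height_step g ryx; have := chain_height_ge g y.
by move: (chain_height g y) (chain_height g x) (nat_of_ord (g x)) (nat_of_ord (g y)); lia.
Qed.

Lemma of_chain_point_inj : {in chain_points r m &, injective of_chain_point}.
Proof.
move=> g g' gW g'W E; have heightE x : chain_height g x = chain_height g' x.
  have := congr1 (fun h : {ffun V -> 'I_m} => nat_of_ord (h x)) E.
  rewrite /= !of_chain_pointE //; have := chain_height_ge g x; have := chain_height_ge g' x.
  by move: (chain_height g x) (chain_height g' x) (nat_of_ord (g x)) (nat_of_ord (g' x)); lia.
apply/ffunP=> x; apply: ord_inj; have := chain_height_rec g x.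
rewrite heightE chain_height_rec (eq_bigr _ (fun y _ => heightE y)).
by move: (\max_(y | r y x) _) (nat_of_ord (g x)) (nat_of_ord (g' x)); lia.
Qed.

End OfChainPoints.

Lemma card_chain_points m : #|chain_points r m| = #|strict_maps r m|.
Proof.
apply/eqP; rewrite eqn_leq; apply/andP; split.
  rewrite -(card_in_imset (@of_chain_point_inj m)); apply: subset_leq_card.
  by apply/subsetP=> f /imsetP[g gW ->]; exact: of_chain_point_strict.
rewrite -(card_in_imset (@to_chain_point_inj m)); apply: subset_leq_card.
by apply/subsetP=> g /imsetP[f fS ->]; exact: to_chain_point_chain.
Qed.

End Transfer.
End ChainPoints.

Section Counting.
Variable V : finType.
Local Notation n := #|V|.

Section Gap.
Variables (P Q : rel V) (u v : V) (t : nat).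
Hypotheses (Quv : Q u v) (nPuv : ~~ comparable_by P u v) (uv : u != v).
Local Notation m := (3 * n * t).

(* Lifting [u] and [v] by [2 n t] breaks the chain constraint of [Q] on [{u, v}] only. *)
Definition lift_uv (h : {ffun V -> 'I_t}) x := h x + 2 * n * t * (x == u) + 2 * n * t * (x == v).

Lemma lift_uv_subproof h x : lift_uv h x < m.
Proof.
have := ltn_ord (h x); have : n > 0 by apply/card_gt0P; exists u.
rewrite /lift_uv; case: (eqVneq x u) => [->|_]; rewrite ?(negbTE uv) /=;
  case: (x == v); move: (nat_of_ord (h x)); nia.
Qed.

Definition lift_uv_map (h : {ffun V -> 'I_t}) : {ffun V -> 'I_m} :=
  [ffun x => Ordinal (lift_uv_subproof h x)].

Lemma lift_uv_map_inj : injective lift_uv_map.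
Proof.
move=> h h' E; apply/ffunP=> x; apply: ord_inj.
have := congr1 (fun a : {ffun V -> 'I_m} => nat_of_ord (a x)) E; rewrite !ffunE /= /lift_uv.
by move: (nat_of_ord (h x)) (nat_of_ord (h' x)); lia.
Qed.

Lemma lift_uv_map_notin h : lift_uv_map h \notin chain_points Q m.
Proof.
apply/negP=> /chain_pointsP/(_ [set u; v]).
have chQ : chain Q [set u; v].
  apply/chainP=> a b; rewrite !inE => /orP[/eqP->|/eqP->] /orP[/eqP->|/eqP->];
    by rewrite ?eqxx // /comparable_by Quv ?orbT.
move/(_ chQ); rewrite big_setU1 ?inE //= big_set1 !ffunE /= /lift_uv.
rewrite !eqxx (eq_sym v) (negbTE uv) /=.
by move: (nat_of_ord (h u)) (nat_of_ord (h v)); nia.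
Qed.

Lemma lift_uv_map_in h : lift_uv_map h \in chain_points P m.
Proof.
apply/chain_pointsP=> K /chainP cK; under eq_bigr => x _ do rewrite ffunE /=.
have notboth : ~~ ((u \in K) && (v \in K)).
  by apply/negP=> /andP[uK vK]; move: (cK u v uK vK uv); rewrite (negbTE nPuv).
have sumE : \sum_(x in K) (lift_uv h x).+1 =
    \sum_(x in K) (h x).+1 + 2 * n * t * (u \in K) + 2 * n * t * (v \in K).
  rewrite -!sum_eq_mem !big_distrr -!big_split /=.
  by apply: eq_bigr => x _; rewrite /lift_uv !addSn.
have sum_le : \sum_(x in K) (h x).+1 <= #|K| * t.
  by rewrite -sum_nat_const; apply: leq_sum => x _; exact: ltn_ord.
have := max_card K; rewrite sumE; move: sum_le notboth.
by case: (u \in K); case: (v \in K) => //= + _; move: (\sum_(x in K) _) #|K|; nia.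
Qed.

Lemma card_chain_points_gap : t ^ n <= #|chain_points P m :\: chain_points Q m|.
Proof.
have -> : t ^ n = #|[set lift_uv_map h | h : {ffun V -> 'I_t}]|.
  by rewrite card_imset; [rewrite card_ffun !card_ord | exact: lift_uv_map_inj].
apply: subset_leq_card; apply/subsetP=> g /imsetP[h _ ->].
by rewrite inE lift_uv_map_in lift_uv_map_notin.
Qed.

End Gap.

Lemma card_noninj_maps_lt t : n * n * (3 * n) ^ n.-1 < t -> #|noninj_maps V (3 * n * t)| < t ^ n.
Proof.
move=> tbig; apply: leq_ltn_trans (card_noninj_maps _ _) _; move: tbig.
case: n => [|k] /= tbig; first by rewrite !muln0.
by rewrite expnS expnMn mulnA ltn_pmul2r // expn_gt0 (leq_ltn_trans (leq0n _) tbig).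
Qed.

Section Comparison.
Variables (P Q : rel V).
Hypotheses (P_irr : irreflexive P) (P_trans : transitive P).
Hypotheses (Q_irr : irreflexive Q) (Q_trans : transitive Q).
Hypothesis PQ : forall x y, P x y -> comparable_by Q x y.

(* Asymptotically in [m], [#|strict_maps r m| ~ #|linexts r| m^n / n!], while
   [#|chain_points r m|] only depends on the comparability graph of [r]. *)
Lemma card_linexts_balance m :
  #|linexts Q| * #|incr_maps V m| + #|chain_points P m :\: chain_points Q m| <=
  #|linexts P| * #|incr_maps V m| + #|noninj_maps V m|.
Proof.
have sub := chain_points_mono m PQ.
have injQ : #|inj_strict_maps Q m| <= #|chain_points Q m|.
  rewrite (card_chain_points Q_irr Q_trans); apply: subset_leq_card.
  by apply/subsetP=> f; rewrite inj_strict_mapsE => /andP[].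
have cpP : #|chain_points P m| <= #|inj_strict_maps P m| + #|noninj_maps V m|.
  by rewrite (card_chain_points P_irr P_trans); exact: strict_maps_le.
rewrite -!card_inj_strict_maps cardsD (setIidPr sub).
by have := subset_leq_card sub; lia.
Qed.

Let t := n * n * (3 * n) ^ n.-1 + 1.

Lemma card_noninj_maps_small : #|noninj_maps V (3 * n * t)| < t ^ n.
Proof. by apply: card_noninj_maps_lt; rewrite /t addn1. Qed.

Lemma card_incr_maps_large : t ^ n <= #|incr_maps V (3 * n * t)|.
Proof. by apply: card_incr_maps_ge; rewrite -mulnA leq_pmull. Qed.

Lemma card_linexts_le : #|linexts Q| <= #|linexts P|.
Proof.
rewrite leqNgt; apply/negP => lt; have := card_linexts_balance (3 * n * t).
have := card_noninj_maps_small; have := card_incr_maps_large; move: lt.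
move: #|linexts Q| #|linexts P| #|incr_maps _ _| #|noninj_maps _ _| #|_ :\: _| (t ^ n).
nia.
Qed.

Lemma card_linexts_lt u v : Q u v -> ~~ comparable_by P u v -> #|linexts Q| < #|linexts P|.
Proof.
move=> Quv nPuv; have uv : u != v by apply: contraTneq Quv => ->; rewrite Q_irr.
rewrite ltnNge; apply/negP => le; have := card_linexts_balance (3 * n * t).
have := card_noninj_maps_small; have := card_chain_points_gap t Quv nPuv uv; move: le.
move: #|linexts Q| #|linexts P| #|incr_maps _ _| #|noninj_maps _ _| #|_ :\: _| (t ^ n).
nia.
Qed.

End Comparison.
End Counting.

Section LinearExtensionCounts.
Variables (V : finType) (e : rel V).
Implicit Types (O : rel V).

Lemma transitive_orientation_edge O x y :
  transitive_orientation e O -> e x y = comparable_by (induced_lt O) x y.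
Proof. by case/andP=> _ /forallP/(_ x)/forallP/(_ y)/eqP. Qed.

Lemma comparable_induced_lt O O' x y : acyclic_orientation e O ->
  transitive_orientation e O' -> induced_lt O' x y -> comparable_by (induced_lt O) x y.
Proof.
move=> aO tO' ltxy; apply: induced_lt_edge (acyclic_orientationW aO) _.
by rewrite (transitive_orientation_edge _ _ tO') /comparable_by ltxy.
Qed.

Lemma n_linext_le_transitive O O' : acyclic_orientation e O ->
  transitive_orientation e O' -> n_linext O <= n_linext O'.
Proof.
move=> aO tO'; have aO' : acyclic_orientation e O' by case/andP: tO'.
rewrite /n_linext !linext_setE; apply: card_linexts_le.
- exact: induced_lt_irr aO'.
- exact: induced_lt_trans.
- exact: induced_lt_irr aO.
- exact: induced_lt_trans.
move=> x y; exact: comparable_induced_lt.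
Qed.

Lemma transitive_of_n_linext_ge O O' : acyclic_orientation e O ->
  transitive_orientation e O' -> n_linext O' <= n_linext O -> transitive_orientation e O.
Proof.
move=> aO tO'; have aO' : acyclic_orientation e O' by case/andP: tO'.
apply: contraTT => ntO; rewrite -ltnNge /n_linext !linext_setE.
move: ntO; rewrite /transitive_orientation aO => /forallPn[x /forallPn[y]].
have [exy|nexy] := boolP (e x y).
  by move: (induced_lt_edge (acyclic_orientationW aO) exy); rewrite /comparable_by => ->.
rewrite eq_sym eqbF_neg negbK (transitive_orientation_edge _ _ tO') in nexy *.
have PQ a b : induced_lt O' a b -> comparable_by (induced_lt O) a b.
  exact: comparable_induced_lt.
have lt_of := card_linexts_lt (induced_lt_irr aO') (@induced_lt_trans _ O')
  (induced_lt_irr aO) (@induced_lt_trans _ O) PQ.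
case/orP=> [ltxy|ltyx]; first exact: lt_of ltxy nexy.
by apply: lt_of ltyx _; rewrite /comparable_by orbC.
Qed.

Lemma epsilon_transitive_orientation F :
  transitive_orientation e (ffrel F) -> epsilon e = n_linext (ffrel F).
Proof.
move=> tF; apply/eqP; rewrite eqn_leq; apply/andP; split.
  by apply/bigmax_leqP=> F' aF'; exact: n_linext_le_transitive aF' tF.
apply: (leq_bigmax_cond (F := fun F => n_linext (ffrel F))).
by case/andP: tF.
Qed.

End LinearExtensionCounts.

Unset Implicit Arguments.

Theorem theorem5p3 (V : finType) (e : rel V)
    (e_sym : symmetric e) (e_irr : irreflexive e)
    (e_comp : is_comparability_graph e)
    (O : rel V) (O_acyc : acyclic_orientation e O) :
  ((forall O' : rel V, acyclic_orientation e O' -> (sqnorm O' <= sqnorm O)%R)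
     <-> transitive_orientation e O) /\
  (transitive_orientation e O <-> n_linext O = epsilon e).
Proof.
have [F tF] := comparability_transitive_orientation e_sym e_comp.
have aF : acyclic_orientation e (ffrel F) by case/andP: tF.
rewrite (epsilon_transitive_orientation tF); split; split.
- by move=> sqnorm_max; exact (transitive_of_sqnorm_ge e_sym e_irr O_acyc tF (sqnorm_max _ aF)).
- by move=> tO O' aO'; exact (sqnorm_le_transitive e_sym e_irr aO' tO).
- move=> tO; apply/eqP; rewrite eqn_leq.
  by rewrite (n_linext_le_transitive O_acyc tF) (n_linext_le_transitive aF tO).
- by move=> E; apply: transitive_of_n_linext_ge O_acyc tF _; rewrite E.
Qed.
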